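(* Let $\mathcal{C}_1$ be an $(n,k,d)$ code constructed from a $t$-design $(I_n,\mathcal{B})\in S_\lambda(n-d+1,r,n)$, achieving $(\bar\alpha,\bar M_1)$, and let $\mathcal{C}_2$ be the $(n,k,d)$ code constructed from the complete block design $S_{\lambda^*}(n-d+1,r,n)$, achieving $(\bar\alpha,\bar M_2)$. Then $\bar M_1\le\bar M_2$, with equality if and only if, in $(I_n,\mathcal{B})$, the quantity $T(A)$ is the same for all sets $A\subset I_n$ with $|A|=n-k$.
   Context: Exact-repair regenerating codes: $n$ disks each storing $\alpha$ symbols, any $k$ disks suffice to reconstruct $M$ information symbols, and a failed disk is repaired from $d$ helper disks; the normalized measures are $\bar\alpha=\alpha/\beta$ and $\bar M=M/\beta$, where $\beta$ is the per-helper repair amount (here the total repair bandwidth is $\gamma=d\beta$). Code construction from a $t$-design $(I_n,\mathcal{B})\in S_\lambda(t,r,n)$ with $t=n-d+1$ (blocks of size $r$, every $t$-subset of $I_n$ contained in exactly $\lambda$ blocks, $N_\lambda(t,r,n)=\lambda\binom{n}{t}\binom{r}{t}^{-1}$ blocks): for $A\subset I_n$ with $|A|=n-k$ let $T(A)=\sum_{B\in\mathcal{B}:|B\cap A|\ge t}(|B\cap A|-t+1)$ and $T=\max_{|A|=n-k}T(A)$. Information symbols (of number $M$) together with $T$ parity symbols of a first-layer linear code fill an $(r-t+1)\times N_\lambda(t,r,n)$ array; each column is extended by $t-1$ parity symbols of a fixed systematic $(r,r-t+1)$ MDS code to form a parity group of $r$ symbols, which are stored one per disk on the disks of the corresponding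 block. The parameters are $\alpha=\lambda\binom{n-1}{t-1}/\binom{r-1}{t-1}$, $\gamma=(r-t+1)\alpha$, $M=(r-t+1)N_\lambda(t,r,n)-T$. The complete block design $S_{\lambda^*}(t,r,n)$ takes all $r$-subsets of $I_n$ as blocks, with $\lambda^*=\binom{n-t}{r-t}$. *)

From mathcomp Require Import all_boot all_order all_algebra.
Set Implicit Arguments. Unset Strict Implicit. Unset Printing Implicit Defensive.
Import Order.TTheory GRing.Theory Num.Theory.

(* A block design on I_n = 'I_n is a list of blocks (repetitions allowed). *)

Definition is_design (n t r lam : nat) (Bs : seq {set 'I_n}) : Prop :=
  (forall B, B \in Bs -> #|B| = r) /\
  (forall S : {set 'I_n}, #|S| = t -> count (fun B : {set 'I_n} => S \subset B) Bs = lam).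

Definition complete_design (n r : nat) : seq {set 'I_n} :=
  enum [set B : {set 'I_n} | #|B| == r].

Definition TA (n t : nat) (Bs : seq {set 'I_n}) (A : {set 'I_n}) : nat :=
  \sum_(B <- Bs | t <= #|B :&: A|) (#|B :&: A| - t + 1).

Definition Tmax (n k t : nat) (Bs : seq {set 'I_n}) : nat :=
  \max_(A : {set 'I_n} | #|A| == n - k) TA t Bs A.

Local Open Scope ring_scope.

Definition code_alpha (n t r lam : nat) : rat :=
  (lam * 'C(n.-1, t.-1))%:R / ('C(r.-1, t.-1))%:R.

Definition code_N (n t r lam : nat) : rat :=
  (lam * 'C(n, t))%:R / ('C(r, t))%:R.

Definition code_gamma (n t r lam : nat) : rat :=
  (r - t + 1)%:R * code_alpha n t r lam.

Definition code_beta (n d t r lam : nat) : rat :=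
  code_gamma n t r lam / d%:R.

Definition code_M (n k t r lam : nat) (Bs : seq {set 'I_n}) : rat :=
  (r - t + 1)%:R * code_N n t r lam - (Tmax k t Bs)%:R.

Definition code_alphabar (n d t r lam : nat) : rat :=
  code_alpha n t r lam / code_beta n d t r lam.

Definition code_Mbar (n k d t r lam : nat) (Bs : seq {set 'I_n}) : rat :=
  code_M k t r lam Bs / code_beta n d t r lam.

From mathcomp Require Import all_boot all_order all_algebra.
From mathcomp Require Import perm ring.
Import Order.TTheory GRing.Theory Num.Theory.
Set Implicit Arguments. Unset Strict Implicit. Unset Printing Implicit Defensive.

(* Averaging T(A) over all (n-k)-subsets A gives the number of blocks times a
   quantity that depends only on the block size r: the sum, over all m-subsets A,
   of a function of |B :&: A| depends only on |B|, since a transposition carrying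
   one set towards another permutes the m-subsets.  The number of blocks is
   proportional to lam, and for the complete design T(A) is constant, so its
   maximum is its average.  For an arbitrary design the maximum dominates the
   average, with equality exactly when T(A) is constant.  Finally
   Mbar = c1 - c2 * T / lam with c2 > 0 independent of lam and of the design. *)

Lemma mul_bin_sub n r t : t <= r -> r <= n ->
  'C(n, r) * 'C(r, t) = 'C(n, t) * 'C(n - t, r - t).
Proof.
move=> le_tr le_rn.
have le_tn := leq_trans le_tr le_rn.
have nr_eq : n - t - (r - t) = n - r by rewrite subnBA // subnK.
have factn_r := bin_fact le_rn; have factr_t := bin_fact le_tr.
have factn_t := bin_fact le_tn.
have := bin_fact (leq_sub2r t le_rn); rewrite nr_eq => factnt_rt.
have facts_gt0 : 0 < t`! * (r - t)`! * (n - r)`! by rewrite !muln_gt0 !fact_gt0.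
apply/eqP; rewrite -(eqn_pmul2r facts_gt0); apply/eqP.
transitivity ('C(n, r) * ('C(r, t) * (t`! * (r - t)`!)) * (n - r)`!); first by ring.
rewrite factr_t -mulnA factn_r -factn_t -factnt_rt; ring.
Qed.

Section DrawsSymmetry.
Variables (T : finType) (f : nat -> nat) (m : nat).

Let S (X : {set T}) := \sum_(Y : {set T} | #|Y| == m) f #|X :&: Y|.

Lemma sum_draws_setI_imset (s : T -> T) (X : {set T}) :
  injective s -> S (s @: X) = S X.
Proof.
move=> s_inj; rewrite /S (reindex_inj (imset_inj s_inj)) /=.
apply: eq_big => [Y|Y _]; first by rewrite card_imset.
by rewrite -imsetI ?card_imset // => ? ? _ _ /s_inj.
Qed.

Lemma sum_draws_setI_card (X X' : {set T}) : #|X| = #|X'| -> S X = S X'.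
Proof.
move Ndiff : #|X :\: X'| => N; elim: N X Ndiff => [|N IHN] X Ndiff cardXX'.
  have subXX' : X \subset X' by rewrite -setD_eq0 -cards_eq0 Ndiff.
  have /eqP -> // : X == X' by rewrite eqEcard subXX' cardXX' leqnn.
have /set0Pn [x] : X :\: X' != set0 by rewrite -card_gt0 Ndiff.
have /set0Pn [y] : X' :\: X != set0.
  by rewrite -card_gt0 cardsD setIC -cardXX' -cardsD Ndiff.
rewrite !inE => /andP[yNX yX'] /andP[xNX' xX].
have swap_inj : injective (tperm x y) := inv_inj (tpermK x y).
rewrite -(sum_draws_setI_imset X swap_inj); apply: IHN; last first.
  by rewrite card_imset.
have -> : tperm x y @: X :\: X' = (X :\: X') :\ x.
  apply/setP => z; rewrite !inE.
  have -> : (z \in tperm x y @: X) = (tperm x y z \in X).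
    by rewrite -{1}(tpermK x y z) mem_imset.
  by case: tpermP => [->|->|/eqP/negbTE -> _]; rewrite ?eqxx ?(negbTE yNX) ?yX' ?andbF.
by move: Ndiff; rewrite (cardsD1 x) !inE xNX' xX => -[].
Qed.

End DrawsSymmetry.

Definition excess (t m : nat) := if t <= m then m - t + 1 else 0.

Lemma TA_excess n t (Bs : seq {set 'I_n}) A :
  TA t Bs A = \sum_(B <- Bs) excess t #|B :&: A|.
Proof. by rewrite /TA big_mkcond. Qed.

Lemma sum_draws_TA n t r m (Bs : seq {set 'I_n}) (B0 : {set 'I_n}) :
  #|B0| = r -> (forall B, B \in Bs -> #|B| = r) ->
  \sum_(A : {set 'I_n} | #|A| == m) TA t Bs A =
  size Bs * \sum_(A : {set 'I_n} | #|A| == m) excess t #|B0 :&: A|.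
Proof.
move=> cardB0 cardBs; under eq_bigr do rewrite TA_excess.
rewrite exchange_big /= -sum1_size big_distrl /=.
apply: eq_big_seq => B /cardBs cardB; rewrite mul1n.
by apply: sum_draws_setI_card; rewrite cardB cardB0.
Qed.

Lemma card_draws_ord n m : #|[pred A : {set 'I_n} | #|A| == m]| = 'C(n, m).
Proof.
have := card_draws 'I_n m; rewrite card_ord => <-.
by apply: eq_card => A; rewrite inE.
Qed.

Lemma size_complete_design n r : size (complete_design n r) = 'C(n, r).
Proof. by rewrite -cardE card_draws card_ord. Qed.

Lemma card_complete_design_block n r B :
  B \in complete_design n r -> #|B| = r.
Proof. by rewrite mem_enum inE => /eqP. Qed.

Lemma TA_complete_design_card n t r (A A' : {set 'I_n}) : #|A| = #|A'| ->
  TA t (complete_design n r) A = TA t (complete_design n r) A'.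
Proof.
have TA_draws X : TA t (complete_design n r) X =
    \sum_(B : {set 'I_n} | #|B| == r) excess t #|X :&: B|.
  by rewrite TA_excess big_enum /=; apply: eq_big => B; rewrite ?inE // setIC.
by rewrite !TA_draws; apply: sum_draws_setI_card.
Qed.

Lemma design_size n t r lam (Bs : seq {set 'I_n}) :
  is_design t r lam Bs -> size Bs * 'C(r, t) = lam * 'C(n, t).
Proof.
case=> cardBs count_Bs.
have -> : lam * 'C(n, t) =
    \sum_(S : {set 'I_n} | #|S| == t) count (fun B : {set 'I_n} => S \subset B) Bs.
  rewrite (eq_bigr (fun _ => lam)) => [|S /eqP /count_Bs //].
  by rewrite sum_nat_const mulnC -card_draws_ord.
under eq_bigr do rewrite -sum1_count big_mkcond.
rewrite exchange_big /= -sum1_size big_distrl /=.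
apply: eq_big_seq => B /cardBs cardB; rewrite mul1n -cardB -cards_draws -sum1_card.
rewrite big_mkcond [RHS]big_mkcond /=; apply: eq_bigr => S _.
by rewrite inE andbC; case: (#|S| == t); case: (S \subset B).
Qed.

Section SumBigmax.
Variables (I : finType) (P : pred I) (F : I -> nat).

Lemma sum_le_card_bigmax : \sum_(i | P i) F i <= #|P| * \max_(i | P i) F i.
Proof.
by rewrite -sum_nat_const leq_sum // => i; apply: leq_bigmax_cond.
Qed.

Lemma sum_eq_card_bigmax :
  \sum_(i | P i) F i = #|P| * \max_(i | P i) F i <-> {in P &, forall i j, F i = F j}.
Proof.
set M := \max_(i | P i) F i.
have le_FM i : P i -> F i <= M by apply: leq_bigmax_cond.
rewrite -sum_nat_const; split=> [sumFM | constF].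
  suff eq_FM i : P i -> F i = M by move=> i j Pi Pj; rewrite !eq_FM.
  move=> Pi; apply/eqP; rewrite eqn_leq le_FM //=.
  have /eqP : \sum_(i | P i) (M - F i) = 0 by rewrite sumnB // sumFM subnn.
  by rewrite sum_nat_eq0 => /forall_inP/(_ i Pi); rewrite subn_eq0.
case: (pickP P) => [i0 Pi0 | noP]; last by rewrite !big_pred0.
have [j Pj ->] : {j | j \in P & M = F j} by apply: eq_bigmax_cond; apply/card_gt0P; exists i0.
by apply: eq_bigr => i Pi; apply: constF.
Qed.

End SumBigmax.

Lemma design_size_bin n t r lam (Bs : seq {set 'I_n}) :
  t <= r -> r <= n -> is_design t r lam Bs ->
  size Bs * 'C(n - t, r - t) = lam * 'C(n, r).
Proof.
move=> le_tr le_rn des; have Crt_gt0 : 0 < 'C(r, t) by rewrite bin_gt0.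
apply/eqP; rewrite -(eqn_pmul2r Crt_gt0) mulnAC (design_size des) -mulnA.
by rewrite -mul_bin_sub // mulnA.
Qed.

Section CompleteDesignComparison.
Variables (n k t r lam : nat) (Bs : seq {set 'I_n}).
Hypotheses (le_tr : t <= r) (le_rn : r <= n) (des : is_design t r lam Bs).

Let P := [pred A : {set 'I_n} | #|A| == n - k].

Let P_gt0 : 0 < #|P|.
Proof. by rewrite card_draws_ord bin_gt0 leq_subr. Qed.

Let C_gt0 : 0 < 'C(n - t, r - t).
Proof. by rewrite bin_gt0 leq_sub2r. Qed.

Lemma Tmax_complete_design_average :
  #|P| * (Tmax k t (complete_design n r) * lam) =
  (\sum_(A | P A) TA t Bs A) * 'C(n - t, r - t).
Proof.
have [B0 cardB0] : exists B0 : {set 'I_n}, #|B0| = r.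
  have /card_gt0P[B0 /eqP] : 0 < #|[pred B : {set 'I_n} | #|B| == r]|.
    by rewrite card_draws_ord bin_gt0.
  by exists B0.
set h := \sum_(A | P A) excess t #|B0 :&: A|.
have sumBs : \sum_(A | P A) TA t Bs A = size Bs * h.
  exact: sum_draws_TA cardB0 des.1.
have maxC : #|P| * Tmax k t (complete_design n r) = 'C(n, r) * h.
  rewrite -size_complete_design -(sum_draws_TA _ _ cardB0 (@card_complete_design_block n r)).
  by symmetry; apply/sum_eq_card_bigmax => A A' /eqP cardA /eqP cardA';
    apply: TA_complete_design_card; rewrite cardA cardA'.
by rewrite mulnA maxC sumBs [RHS]mulnAC (design_size_bin le_tr le_rn des); ring.
Qed.

Lemma Tmax_complete_design_le :
  Tmax k t (complete_design n r) * lam <= Tmax k t Bs * 'C(n - t, r - t).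
Proof.
rewrite -(leq_pmul2l P_gt0) Tmax_complete_design_average mulnA leq_pmul2r //.
exact: sum_le_card_bigmax.
Qed.

Lemma Tmax_complete_design_eq :
  Tmax k t (complete_design n r) * lam = Tmax k t Bs * 'C(n - t, r - t) <->
  (forall A A' : {set 'I_n}, #|A| = n - k -> #|A'| = n - k ->
     TA t Bs A = TA t Bs A').
Proof.
apply: iff_trans (iff_trans (sum_eq_card_bigmax P (TA t Bs)) _).
  have avgE : (Tmax k t (complete_design n r) * lam == Tmax k t Bs * 'C(n - t, r - t)) =
      (\sum_(A | P A) TA t Bs A == #|P| * Tmax k t Bs).
    by rewrite -(eqn_pmul2l P_gt0) Tmax_complete_design_average mulnA eqn_pmul2r.
  by split=> [/eqP | sumE]; [rewrite avgE => /eqP | apply/eqP; rewrite avgE sumE].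
split=> [eqTA A A' cardA cardA' | eqTA A A' /eqP cardA /eqP cardA'].
  by apply: eqTA; rewrite inE ?cardA ?cardA'.
exact: eqTA.
Qed.

End CompleteDesignComparison.

Local Open Scope ring_scope.

Lemma code_Mbar_affine n k d t r : (0 < d)%N -> (0 < t)%N -> (t <= r <= n)%N ->
  exists2 c : rat * rat, 0 < c.2 &
    forall lam (Bs : seq {set 'I_n}), (0 < lam)%N ->
      code_Mbar k d t r lam Bs = c.1 - c.2 * ((Tmax k t Bs)%:R / lam%:R).
Proof.
move=> d_gt0 t_gt0 /andP[le_tr le_rn].
have pos m : (0 < m)%N -> 0 < m%:R :> rat by rewrite ltr0n.
have Cr1 : 0 < 'C(r.-1, t.-1)%:R :> rat by rewrite pos // bin_gt0 -!subn1 leq_sub2r.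
have Cn1 : 0 < 'C(n.-1, t.-1)%:R :> rat.
  by rewrite pos // bin_gt0 -!subn1 leq_sub2r // (leq_trans le_tr).
have Crt : 0 < 'C(r, t)%:R :> rat by rewrite pos // bin_gt0.
have rt1 : 0 < (r - t + 1)%:R :> rat by rewrite pos // addn1.
have dd : 0 < d%:R :> rat by rewrite pos.
exists (d%:R * 'C(n, t)%:R * 'C(r.-1, t.-1)%:R / ('C(r, t)%:R * 'C(n.-1, t.-1)%:R),
        d%:R * 'C(r.-1, t.-1)%:R / ((r - t + 1)%:R * 'C(n.-1, t.-1)%:R)) => /=.
  by rewrite divr_gt0 ?mulr_gt0.
move=> lam Bs lam_gt0; have ll : 0 < lam%:R :> rat by rewrite pos.
rewrite /code_Mbar /code_M /code_beta /code_gamma /code_alpha /code_N !natrM.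
by field; rewrite natr1 -addn1 !lt0r_neq0.
Qed.

Section NatRatios.
Variables (R : numFieldType) (a b c e : nat).
Hypotheses (b_gt0 : (0 < b)%N) (e_gt0 : (0 < e)%N).

Lemma ler_nat_ratio :
  (a%:R / b%:R <= c%:R / e%:R :> R) = (a * e <= c * b)%N.
Proof.
by rewrite ler_pdivrMr ?ltr0n // mulrAC ler_pdivlMr ?ltr0n // -!natrM ler_nat.
Qed.

Lemma eqr_nat_ratio :
  (a%:R / b%:R == c%:R / e%:R :> R) = (a * e == c * b)%N.
Proof. by rewrite eqr_div ?pnatr_eq0 -?lt0n // -!natrM eqr_nat. Qed.

End NatRatios.

Unset Implicit Arguments.

Theorem mainTheorem5 (n k d r lam : nat) (Bs : seq {set 'I_n}) :
  (1 <= k)%N -> (k <= d)%N -> (d < n)%N ->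
  ((n - d).+1 <= r)%N -> (r <= n)%N -> (0 < lam)%N ->
  is_design (n - d).+1 r lam Bs ->
  let t := (n - d).+1 in
  let M1 := code_Mbar k d t r lam Bs in
  let M2 := code_Mbar k d t r 'C(n - t, r - t) (complete_design n r) in
  M1 <= M2 /\
  (M1 = M2 <->
   (forall A A' : {set 'I_n}, #|A| = (n - k)%N -> #|A'| = (n - k)%N ->
      TA t Bs A = TA t Bs A')).
Proof.
move=> k_gt0 le_kd _ le_tr le_rn lam_gt0 des t M1 M2.
have le_trn : (t <= r <= n)%N by rewrite le_tr.
have [c c2_gt0 Mbar_eq] := code_Mbar_affine k (leq_trans k_gt0 le_kd) (ltn0Sn _) le_trn.
have C_gt0 : (0 < 'C(n - t, r - t))%N by rewrite bin_gt0 leq_sub2r.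
rewrite /M1 /M2 !Mbar_eq // lerD2l lerN2 ler_pM2l // ler_nat_ratio //.
split; first exact: Tmax_complete_design_le.
rewrite -(Tmax_complete_design_eq k le_tr le_rn des); split=> [/subrI/(mulfI (lt0r_neq0 c2_gt0))/eqP | /eqP E].
  by rewrite eq_sym eqr_nat_ratio // => /eqP.
by congr (_ - _ * _); apply/eqP; rewrite eq_sym eqr_nat_ratio.
Qed.
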